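(* For every integer $p\ge 3$, $$\mu(S_p^2)=\begin{cases}\frac{(p+1)^2}{4}, & p\text{ odd},\\ \frac{p(p+2)}{4}, & p\text{ even},\end{cases}\qquad \#\mu(S_p^2)=\begin{cases}\binom{p}{(p+1)/2}, & p\text{ odd},\\ \binom{p+1}{(p+2)/2}, & p\text{ even}.\end{cases}$$
   Context: For $p\ge3$, $n\ge1$, the Sierpiński graph $S_p^n$ has vertex set $\{0,1,\dots,p-1\}^n$, a vertex $(i_1,\dots,i_n)$ written $i_1\cdots i_n$; vertices $i_1\cdots i_n$ and $j_1\cdots j_n$ are adjacent iff there is $h\in\{1,\dots,n\}$ with $i_t=j_t$ for all $t<h$, $i_h\ne j_h$, and $i_t=j_h$, $j_t=i_h$ for all $t>h$. For $X\subseteq V(G)$, vertices $u,v$ are $X$-visible if there exists a shortest $u,v$-path $P$ with $V(P)\cap X\subseteq\{u,v\}$; $X$ is a mutual-visibility set if every two vertices of $X$ are $X$-visible; $\mu(G)$ is the maximum size of a mutual-visibility set, and $\#\mu(G)$ is the number of mutual-visibility sets of size $\mu(G)$. *)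

From mathcomp Require Import all_boot.
From mathcomp Require Import boolp.

Set Implicit Arguments.
Unset Strict Implicit.
Unset Printing Implicit Defensive.

Section Graphs.
Variable T : finType.
Variable e : rel T.

(* A u,v-walk: the vertex sequence u :: s, consecutive vertices adjacent,
   ending at v; its length is size s. *)
Definition walk (u v : T) (s : seq T) : bool := path e u s && (last u s == v).

Definition shortest_path (u v : T) (s : seq T) : Prop :=
  walk u v s /\ forall t, walk u v t -> size s <= size t.

Definition visible (X : {set T}) (u v : T) : Prop :=
  exists s, shortest_path u v s /\
    forall x, x \in u :: s -> x \in X -> x = u \/ x = v.

Definition mutual_visibility (X : {set T}) : Prop :=
  forall u v, u \in X -> v \in X -> visible X u v.

Definition mu : nat := \max_(X : {set T} | `[< mutual_visibility X >]) #|X|.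

Definition num_mu : nat :=
  #|[set X : {set T} | `[< mutual_visibility X >] && (#|X| == mu)]|.

End Graphs.

(* Sierpinski graph S_p^n: vertices are words i_1..i_n (indices 0..n-1 here)
   over {0,..,p-1}. *)
Definition Svert (p n : nat) := {ffun 'I_n -> 'I_p}.

Definition sierpinski_adj (p n : nat) : rel (Svert p n) :=
  fun x y => [exists h : 'I_n,
    (x h != y h) &&
    [forall t : 'I_n, ((t < h)%N ==> (x t == y t)) &&
                      ((h < t)%N ==> ((x t == y h) && (y t == x h)))]].

(* Write the vertices of S_p^2 as pairs (i,j), the copy i and the position j
   inside it, and let S be the set of copies met by a mutual-visibility set X.
   Between two copies i <> k every shortest path crosses the bridge (i,k)(k,i),
   except for one detour through a third copy; a case analysis of these paths
   shows that each row {j | (i,j) in X} with i in S lies in {k} u ~S for some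
   k in S.  Hence |X| <= |S| (p + 1 - |S|) <= (p+1)^2 / 4, and equality forces
   every row i in S to be {i} u ~S.  Conversely that set is in mutual
   visibility for every S, so the maximum sets correspond to the subsets S of
   size floor((p+1)/2) or ceil((p+1)/2). *)

From mathcomp Require Import all_boot.
From mathcomp Require Import boolp.
From mathcomp Require Import zify.

Set Implicit Arguments.
Unset Strict Implicit.
Unset Printing Implicit Defensive.
Set Bullet Behavior "Strict Subproofs".

Lemma sqr_div4_addn a d : (a + (a + d)) ^ 2 %/ 4 = a * (a + d) + d ^ 2 %/ 4.
Proof.
have -> : (a + (a + d)) ^ 2 = a * (a + d) * 4 + d ^ 2 by rewrite !expnS expn0; lia.
by rewrite divnMDl.
Qed.

Lemma mul_le_sqr_div4 a b : a * b <= (a + b) ^ 2 %/ 4.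
Proof.
wlog ab : a b / a <= b => [H | ].
  by case: (leqP a b) => [/H // | /ltnW /H]; rewrite mulnC addnC.
by rewrite -(subnKC ab) sqr_div4_addn leq_addr.
Qed.

Lemma mul_eq_sqr_div4 a b : (a * b == (a + b) ^ 2 %/ 4) = (a <= b.+1) && (b <= a.+1).
Proof.
wlog ab : a b / a <= b => [H | ].
  by case: (leqP a b) => [/H // | /ltnW /H]; rewrite mulnC addnC andbC.
rewrite -(subnKC ab) sqr_div4_addn -{1}[a * _]addn0 eqn_add2l eq_sym.
by case: (b - a) => [|[|d]]; rewrite ?expnS ?expn0; nia.
Qed.

Lemma card_draws_succ (T : finType) k :
  #|[set A : {set T} | (#|A| == k) || (#|A| == k.+1)]| = 'C(#|T|.+1, k.+1).
Proof.
have -> : [set A : {set T} | (#|A| == k) || (#|A| == k.+1)] =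
    [set A : {set T} | #|A| == k] :|: [set A : {set T} | #|A| == k.+1].
  by apply/setP => A; rewrite !inE.
rewrite cardsU !card_draws binS addnC.
suff -> : [set A : {set T} | #|A| == k] :&: [set A : {set T} | #|A| == k.+1] = set0.
  by rewrite cards0 subn0.
by apply/setP => A; rewrite !inE; case: eqP => // ->; lia.
Qed.

Section SierpinskiTwo.
Variable p : nat.
Local Notation V := (Svert p 2).
Local Notation adj := (@sierpinski_adj p 2).

Definition word2 (a b : 'I_p) : V := [ffun t : 'I_2 => if t == ord0 then a else b].

Lemma ord2P (t : 'I_2) : t = ord0 \/ t = ord_max.
Proof. by case: t => [[|[|//]] ?]; [left | right]; apply: val_inj. Qed.

Lemma word2_eta (x : V) : x = word2 (x ord0) (x ord_max).
Proof. by apply/ffunP => t; rewrite ffunE; case: (ord2P t) => ->. Qed.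

Lemma word2P (x : V) : exists a b, x = word2 a b.
Proof. by exists (x ord0), (x ord_max); apply: word2_eta. Qed.

Lemma word2_0 a b : word2 a b ord0 = a. Proof. by rewrite ffunE. Qed.
Lemma word2_1 a b : word2 a b ord_max = b. Proof. by rewrite ffunE. Qed.

Lemma eq_word2 a b c d : (word2 a b == word2 c d) = (a == c) && (b == d).
Proof.
apply/eqP/andP => [E | [/eqP -> /eqP ->]] //.
by split; apply/eqP; [rewrite -(word2_0 a b) E word2_0 | rewrite -(word2_1 a b) E word2_1].
Qed.

Lemma word2_inj a b c d : word2 a b = word2 c d -> a = c /\ b = d.
Proof. by move/eqP; rewrite eq_word2 => /andP [/eqP -> /eqP ->]. Qed.

Lemma sierpinski2_adjE a b c d : adj (word2 a b) (word2 c d) <->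
  (a = c /\ b <> d) \/ (a <> c /\ b = c /\ d = a).
Proof.
rewrite /sierpinski_adj; split.
- move=> /existsP [h /andP [hne /forallP H]].
  have [H0 H1] := (H ord0, H ord_max).
  case: (ord2P h) => Eh; subst h; rewrite !ffunE /= in hne H0 H1.
  + by right; move: H1 => /andP [/eqP -> /eqP ->]; split=> //; apply/eqP.
  + by left; move: H0 => /andP [/eqP -> _]; split=> //; apply/eqP.
- case=> [[-> /eqP bd] | [/eqP ac [-> ->]]].
  + apply/existsP; exists ord_max; rewrite !ffunE /= bd.
    by apply/forallP => t; case: (ord2P t) => ->; rewrite !ffunE /= ?eqxx.
  + apply/existsP; exists ord0; rewrite !ffunE /= ac.
    by apply/forallP => t; case: (ord2P t) => ->; rewrite !ffunE /= ?eqxx.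
Qed.

Lemma adj_row a b d : b <> d -> adj (word2 a b) (word2 a d).
Proof. by move=> bd; apply/sierpinski2_adjE; left. Qed.

Lemma adj_bridge a c : a <> c -> adj (word2 a c) (word2 c a).
Proof. by move=> ac; apply/sierpinski2_adjE; right. Qed.

Lemma walk_nil (u v : V) : walk adj u v [::] = (u == v).
Proof. by []. Qed.

Lemma walk_cons (u v w : V) s : walk adj u v (w :: s) = adj u w && walk adj w v s.
Proof. by rewrite /walk /= andbA. Qed.

Ltac case_word2 x := let E := fresh "E" in case: (word2P x) => ? [? E]; subst x.
Ltac case_adj H := move/sierpinski2_adjE: H => [[? ?] | [? [? ?]]]; subst.

(* For i <> k, a shortest walk from (i,j) to (k,l) crosses the bridge
   (i,k)(k,i); the boolean terms count the moves to (i,k) and from (k,i). *)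
Definition corner_dist (i j k l : 'I_p) : nat := (j != k) + 1 + (l != i).

Definition corner_path (i j k l : 'I_p) : seq V :=
  (if j == k then [::] else [:: word2 i k]) ++
  (if l == i then [:: word2 k l] else [:: word2 k i; word2 k l]).

Lemma corner_path_walk i j k l : i <> k ->
  walk adj (word2 i j) (word2 k l) (corner_path i j k l).
Proof.
move=> ik; rewrite /corner_path; case: eqP => jk; case: eqP => li; subst => /=;
  rewrite ?walk_cons walk_nil eqxx ?andbT ?adj_bridge ?adj_row //.
all: by move=> E; apply: li; rewrite E.
Qed.

Lemma size_corner_path i j k l : size (corner_path i j k l) = corner_dist i j k l.
Proof. by rewrite /corner_path /corner_dist; do 2 case: eqP. Qed.

Lemma walk_size_ge i j k l t : i <> k -> walk adj (word2 i j) (word2 k l) t ->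
  corner_dist i j k l <= size t.
Proof.
rewrite /corner_dist => ik; case: t => [|a [|b [|c t]]] /=.
- by rewrite walk_nil eq_word2 => /andP [/eqP].
- rewrite walk_cons walk_nil => /andP [H /eqP E]; subst a.
  by case_adj H; rewrite ?eqxx.
- rewrite !walk_cons walk_nil => /andP [H1 /andP [H2 /eqP E]]; subst b.
  case_word2 a; case_adj H1; case_adj H2; try done;
    by rewrite /= ?eqxx; repeat case: (_ != _).
- by case: (j != k); case: (l != i).
Qed.

(* The only other shortest walk exists when j = l: it crosses the copy j,
   through the bridges (i,j)(j,i) and (j,k)(k,j). *)
Lemma short_walk_cases i j k l t : i <> k ->
  walk adj (word2 i j) (word2 k l) t -> size t <= corner_dist i j k l ->
  t = corner_path i j k l \/
  [/\ j = l, j <> i, j <> k & t = [:: word2 j i; word2 j k; word2 k l]].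
Proof.
rewrite /corner_dist => ik; case: t => [|a [|b [|c t]]] /=.
- by rewrite walk_nil eq_word2 => /andP [/eqP].
- rewrite walk_cons walk_nil => /andP [H /eqP E] _; subst a.
  by left; case_adj H; rewrite /corner_path ?eqxx.
- rewrite !walk_cons walk_nil => /andP [H1 /andP [H2 /eqP E]] _; subst b.
  left; case_word2 a; case_adj H1; case_adj H2; rewrite // /corner_path;
    by repeat (case: eqP => ?; try subst).
- rewrite !walk_cons => /andP [H1 /andP [H2 /andP [H3 H4]]] Hs.
  have [jk li] : j <> k /\ l <> i by move: Hs; do 2 case: eqP.
  case: t H4 Hs => [|x t]; last by rewrite !addnS /=; case: (j != k); case: (l != i).
  rewrite walk_nil => /eqP E _; subst c.
  case_word2 a; case_word2 b; case_adj H1; case_adj H2; case_adj H3; try done.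
  all: first [ by left; rewrite /corner_path; repeat (case: eqP => ? //)
             | by right; split => //; congruence ].
Qed.

Lemma shortest_walk_word2 i j k l s : i <> k ->
  shortest_path adj (word2 i j) (word2 k l) s ->
  s = corner_path i j k l \/
  [/\ j = l, j <> i, j <> k & s = [:: word2 j i; word2 j k; word2 k l]].
Proof.
move=> ik [Hs Hmin]; apply: short_walk_cases Hs _ => //.
by rewrite -size_corner_path; apply/Hmin/corner_path_walk.
Qed.

Lemma visible_corner (X : {set V}) i j k l : i != k -> j != k ->
  word2 i k \in X -> visible adj X (word2 i j) (word2 k l) ->
  j = l /\ word2 j k \notin X.
Proof.
move=> /eqP ik jk ikX [s [/(shortest_walk_word2 ik) [-> | [jl ji _ ->]] Hvis]].
- have : word2 i k \in word2 i j :: corner_path i j k l.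
    by rewrite /corner_path (negbTE jk) !inE eqxx !orbT.
  move/Hvis/(_ ikX) => [/word2_inj [_ kj] | /word2_inj [/ik //]].
  by rewrite kj eqxx in jk.
- split => //; apply/negP => jkX.
  have : word2 j k \in word2 i j :: [:: word2 j i; word2 j k; word2 k l].
    by rewrite !inE eqxx !orbT.
  move/Hvis/(_ jkX) => [/word2_inj [/ji] // | /word2_inj [jk' _]].
  by rewrite jk' eqxx in jk.
Qed.

Definition canonical_mvset (S : {set 'I_p}) : {set V} :=
  [set x : V | (x ord0 \in S) && ((x ord_max \notin S) || (x ord_max == x ord0))].

Lemma in_canonical_mvset S a b :
  (word2 a b \in canonical_mvset S) = (a \in S) && ((b \notin S) || (b == a)).
Proof. by rewrite inE word2_0 word2_1. Qed.

Lemma canonical_mvsetP S : mutual_visibility adj (canonical_mvset S).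
Proof.
move=> u v; case: (word2P u) => i [j ->]; case: (word2P v) => k [l ->].
rewrite !in_canonical_mvset => /andP [iS _] /andP [kS _].
have [<- | /eqP ik] := eqVneq i k.
  have [<- | jl] := eqVneq j l.
    exists [::]; split; first by split => //; rewrite walk_nil.
    by move=> x; rewrite inE => /eqP -> _; left.
  exists [:: word2 i l]; split; last first.
    by move=> x; rewrite !inE => /orP [] /eqP ->; [left | right].
  split; first by rewrite walk_cons walk_nil eqxx adj_row //; apply/eqP.
  case=> [|? ?] //; rewrite walk_nil eq_word2 eqxx /= => /eqP E.
  by rewrite E eqxx in jl.
exists (corner_path i j k l); split.
  split; first exact: corner_path_walk.
  by move=> t Ht; rewrite size_corner_path; apply: walk_size_ge Ht.
have ikF : (i == k) = false by apply/eqP.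
move=> x; rewrite inE /corner_path mem_cat => /orP [/eqP -> | /orP []]; first by left.
- case: eqP => // _; rewrite inE => /eqP ->.
  by rewrite in_canonical_mvset iS kS eq_sym ikF.
- case: eqP => [-> | _]; first by rewrite inE => /eqP ->; right.
  rewrite 2!inE => /orP [] /eqP ->; last by right.
  by rewrite in_canonical_mvset kS iS ikF.
Qed.

Lemma canonical_mvset_inj : injective canonical_mvset.
Proof.
move=> S1 S2 E; apply/setP => i.
have : (word2 i i \in canonical_mvset S1) = (word2 i i \in canonical_mvset S2) by rewrite E.
by rewrite !in_canonical_mvset !eqxx !orbT !andbT.
Qed.

Definition row (X : {set V}) i := [set j | word2 i j \in X].

Definition support (X : {set V}) := [set i | row X i != set0].

Lemma mem_row (X : {set V}) i j : (j \in row X i) = (word2 i j \in X).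
Proof. by rewrite inE. Qed.

Lemma supportP (X : {set V}) i : reflect (exists j, word2 i j \in X) (i \in support X).
Proof. by rewrite inE; apply: (iffP (set0Pn _)) => -[j jX]; exists j; rewrite ?inE in jX *. Qed.

Lemma card_rows (X : {set V}) : #|X| = \sum_(i in support X) #|row X i|.
Proof.
rewrite [RHS]big_mkcond /=.
transitivity (\sum_i \sum_j (word2 i j \in X : nat)).
  rewrite pair_big /= -sum1_card big_mkcond /=.
  rewrite (reindex (fun q : 'I_p * 'I_p => word2 q.1 q.2)) /=.
    by apply: eq_bigr => q _; case: (_ \in X).
  exists (fun x : V => (x ord0, x ord_max)) => [[a b] _ | x _] /=.
    by rewrite word2_0 word2_1.
  by rewrite -word2_eta.
apply: eq_bigr => i _.
have -> : \sum_j (word2 i j \in X : nat) = #|row X i|.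
  by rewrite -sum1_card [RHS]big_mkcond; apply: eq_bigr => j _; rewrite inE.
by rewrite inE; case: eqP => [-> |]; rewrite ?cards0.
Qed.

Lemma row_canonical_mvset S i :
  row (canonical_mvset S) i = if i \in S then i |: ~: S else set0.
Proof.
apply/setP => j; rewrite !inE word2_0 word2_1.
by case: (i \in S); rewrite /= ?inE // orbC.
Qed.

Lemma support_canonical_mvset S : support (canonical_mvset S) = S.
Proof.
apply/setP => i; rewrite inE row_canonical_mvset.
by case: (i \in S); rewrite ?eqxx //; apply/set0Pn; exists i; rewrite setU11.
Qed.

Lemma card_canonical_mvset S : #|canonical_mvset S| = #|S| * #|~: S|.+1.
Proof.
rewrite card_rows support_canonical_mvset -sum_nat_const.
apply: eq_bigr => i iS; rewrite row_canonical_mvset iS cardsU1.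
by rewrite in_setC iS add1n.
Qed.

Section MaximalRows.
Variable X : {set V}.
Hypothesis mvX : mutual_visibility adj X.
Local Notation S := (support X).

Lemma row_nil i : i \notin S -> row X i = set0.
Proof. by rewrite inE negbK => /eqP. Qed.

Lemma row_exit i k j : i != k -> k \in S -> k \in row X i -> j \in row X i ->
  j != k -> j \notin S /\ row X k \subset [set j].
Proof.
rewrite !mem_row => ik kS ikX ijX jk.
(* (i,k) in X blocks the corner path, so (i,j) sees (k,l) only via copy j. *)
have corner l : word2 k l \in X -> j = l /\ word2 j k \notin X.
  by move=> klX; apply: visible_corner ik jk ikX (mvX ijX klX).
have [l klX] := supportP _ _ kS.
split; last by apply/subsetP => l'; rewrite mem_row inE => /corner [-> _].
apply/supportP => -[m jmX].
have ij : i != j.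
  by apply: contraTneq ikX => ->; have [_] := corner _ klX.
have kj : k != j by rewrite eq_sym.
have [km _] := visible_corner ij kj ijX (mvX ikX jmX).
by have [_ /negP] := corner _ klX; rewrite km.
Qed.

Lemma row_subset_support_compl i : i \in S -> exists2 k, k \in S & row X i \subset k |: ~: S.
Proof.
move=> iS; have [sub | /subsetPn [k kR]] := boolP (row X i \subset i |: ~: S).
  by exists i.
rewrite in_setU1 in_setC negb_or negbK eq_sym => /andP [ik kS].
exists k => //; apply/subsetP => j jR; rewrite in_setU1 in_setC.
have [// | jk /=] := eqVneq j k.
by have [] := row_exit ik kS kR jR jk.
Qed.

Lemma card_row_le i : i \in S -> #|row X i| <= #|~: S|.+1.
Proof.
case/row_subset_support_compl => k kS /subset_leq_card /leq_trans; apply.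
by rewrite cardsU1 in_setC kS.
Qed.

Lemma card_mv_le : #|X| <= #|S| * #|~: S|.+1.
Proof. by rewrite card_rows -sum_nat_const; apply: leq_sum => i; apply: card_row_le. Qed.

Lemma full_rows_canonical : (forall i, i \in S -> #|row X i| = #|~: S|.+1) ->
  ~: S != set0 -> forall i, i \in S -> row X i = i |: ~: S.
Proof.
move=> full /set0Pn [j jS'] i iS; have [k kS sub] := row_subset_support_compl iS.
have Ek : row X i = k |: ~: S.
  by apply/eqP; rewrite eqEcard sub cardsU1 in_setC kS full //=.
have [ik | ik] := eqVneq i k; first by rewrite Ek ik.
have jR : j \in row X i by rewrite Ek setU1r.
have kR : k \in row X i by rewrite Ek setU11.
have jk : j != k by apply: contraTneq jS' => ->; rewrite in_setC kS.
have [_ /subset_leq_card] := row_exit ik kS kR jR jk.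
by rewrite cards1 full // ltnS leqn0 cards_eq0 => /eqP S0; rewrite S0 inE in jS'.
Qed.

Lemma mv_eq_canonical : #|X| = #|S| * #|~: S|.+1 -> ~: S != set0 ->
  X = canonical_mvset S.
Proof.
move=> EX nS.
have full i : i \in S -> #|row X i| = #|~: S|.+1.
  have [_] := @leqif_sum _ (fun i => i \in S) (fun i => #|row X i| == #|~: S|.+1)
    (fun i => #|row X i|) (fun _ => #|~: S|.+1) (fun i iS => leqif_eq (card_row_le iS)).
  rewrite -card_rows sum_nat_const EX eqxx => /esym/forall_inP full.
  by move/full/eqP.
apply/setP => x; case: (word2P x) => i [j ->]; rewrite in_canonical_mvset -mem_row.
case: (boolP (i \in S)) => iS /=; last by rewrite (row_nil iS) inE.
by rewrite (full_rows_canonical full nS iS) in_setU1 in_setC orbC.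
Qed.

End MaximalRows.

Lemma card_setC_succ (S : {set 'I_p}) : #|S| + #|~: S|.+1 = p.+1.
Proof. by rewrite addnS cardsC card_ord. Qed.

Lemma card_canonical_mvset_max (S : {set 'I_p}) :
  (#|canonical_mvset S| == p.+1 ^ 2 %/ 4) = (#|S| == p.+1./2) || (#|S| == uphalf p.+1).
Proof.
rewrite card_canonical_mvset.
have := mul_eq_sqr_div4 #|S| #|~: S|.+1; rewrite card_setC_succ => ->.
by have := card_setC_succ S; lia.
Qed.

Lemma card_mv_max (X : {set V}) :
  mutual_visibility adj X -> #|X| <= p.+1 ^ 2 %/ 4.
Proof.
move=> /card_mv_le /leq_trans; apply.
by rewrite -(card_setC_succ (support X)) mul_le_sqr_div4.
Qed.

Lemma mu_sierpinski2 : mu adj = p.+1 ^ 2 %/ 4.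
Proof.
apply/eqP; rewrite eqn_leq; apply/andP; split.
  by apply/bigmax_leqP => X /asboolP /card_mv_max.
have : 0 < #|[set S : {set 'I_p} | #|S| == p.+1./2]|.
  by rewrite card_draws card_ord bin_gt0; lia.
rewrite card_gt0 => /set0Pn [S]; rewrite inE => S_half.
have /eqP <- : #|canonical_mvset S| == p.+1 ^ 2 %/ 4.
  by rewrite card_canonical_mvset_max S_half.
by apply: leq_bigmax_cond; apply/asboolP; apply: canonical_mvsetP.
Qed.

Lemma max_mv_canonical (X : {set V}) : 2 < p ->
  mutual_visibility adj X -> #|X| = p.+1 ^ 2 %/ 4 -> X = canonical_mvset (support X).
Proof.
move=> p_gt2 mvX EX.
have S_max : #|support X| * #|~: support X|.+1 = p.+1 ^ 2 %/ 4.
  have := card_mv_le mvX; have := mul_le_sqr_div4 #|support X| #|~: support X|.+1.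
  by rewrite card_setC_succ; lia.
apply: (mv_eq_canonical mvX); first by rewrite EX.
apply/eqP => S_full; move: S_max (card_setC_succ (support X)).
rewrite S_full cards0 muln1 addn1 => -> /eqP; rewrite eqSS gtn_eqF //.
by rewrite leq_divRL // expnS expn1 leq_mul2l ltnS p_gt2 orbT.
Qed.

Lemma num_mu_sierpinski2 : 2 < p ->
  num_mu adj = #|[set S : {set 'I_p} | (#|S| == p.+1./2) || (#|S| == uphalf p.+1)]|.
Proof.
move=> p_gt2; rewrite /num_mu mu_sierpinski2 -(card_imset _ canonical_mvset_inj).
apply: eq_card => X; rewrite inE; apply/andP/imsetP.
- case=> /asboolP mvX /eqP EX; have X_can := max_mv_canonical p_gt2 mvX EX.
  by exists (support X); rewrite // inE -card_canonical_mvset_max -X_can EX.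
- case=> S; rewrite inE -card_canonical_mvset_max => S_max ->.
  by split => //; apply/asboolP/canonical_mvsetP.
Qed.

End SierpinskiTwo.

Theorem theorem3p1 (p : nat) : 3 <= p ->
  mu (@sierpinski_adj p 2) =
    (if odd p then (p + 1) ^ 2 %/ 4 else p * (p + 2) %/ 4) /\
  num_mu (@sierpinski_adj p 2) =
    (if odd p then 'C(p, (p + 1) %/ 2) else 'C(p + 1, (p + 2) %/ 2)).
Proof.
move=> p_gt2; rewrite mu_sierpinski2 num_mu_sierpinski2 // addn1.
have [p_odd | p_even] := boolP (odd p).
- have -> : uphalf p.+1 = p.+1./2 by lia.
  under eq_finset => S do rewrite orbb.
  by rewrite card_draws card_ord; split => //; congr 'C(_, _); lia.
- have -> : uphalf p.+1 = (p.+1./2).+1 by lia.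
  rewrite card_draws_succ card_ord; split; last by congr 'C(_, _); lia.
  have [q ->] : exists q, p = q.*2 by exists p./2; lia.
  by rewrite !expnS expn0; lia.
Qed.
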